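(* Let $\pi=\mathcal{N}(\mu,Q^{-1})$ and $q=\mathcal{N}(\mu',\widetilde{Q}^{-1})$ be Gaussian distributions on $\mathbb{R}^p$, where $Q$ is positive definite and partitioned into blocks, and $\widetilde{Q}$ is the block-diagonal matrix having the same diagonal blocks as $Q$ and zeros elsewhere. Let $\bar{Q}=\widetilde{Q}^{-1/2}Q\widetilde{Q}^{-1/2}$. Let $k\ne\ell$ be two block indices and $v_k,v_\ell\in\mathbb{R}^p\setminus\{0\}$ vectors such that $v_k$ is zero outside block $k$ and $v_\ell$ is zero outside block $\ell$. Then $$UQF(q\Vert\pi)\le1-\frac{v_k^T\bar{Q}v_\ell}{\|v_k\|\,\|v_\ell\|}.$$
   Context: The uncertainty quantification fraction is $UQF(q\Vert\pi)=\inf_{v\in\mathbb{R}^p\setminus\{0\}}\frac{\mathrm{var}_{q}(\theta^Tv)}{\mathrm{var}_{\pi}(\theta^Tv)}$. Matrix square roots are symmetric positive definite square roots. *)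

From HB Require Import structures.
From mathcomp Require Import all_boot all_order all_algebra.
From mathcomp Require Import boolp classical_sets reals.
Set Implicit Arguments. Unset Strict Implicit. Unset Printing Implicit Defensive.
Import Order.TTheory GRing.Theory Num.Theory.
Local Open Scope ring_scope.
Local Open Scope classical_set_scope.

Definition posdef {R : realType} {p : nat} (A : 'M[R]_p) : Prop :=
  A^T = A /\ forall v : 'cV[R]_p, v != 0 -> 0 < (v^T *m A *m v) 0 0.

(* The Gaussian N(mu, Q^-1) on R^p, given by its mean mu and precision Q,
   is encoded by its parameters.  The variance of the linear functional
   theta |-> theta^T v under N(mu, Q^-1) is v^T Q^-1 v. *)
Record gaussian (R : realType) (p : nat) := Gaussian {
  g_mean : 'cV[R]_p;
  g_prec : 'M[R]_p }.

Definition gvar {R : realType} {p : nat} (g : gaussian R p) (v : 'cV[R]_p) : R :=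
  (v^T *m invmx (g_prec g) *m v) 0 0.

Definition UQF {R : realType} {p : nat} (q pi : gaussian R p) : R :=
  inf [set r : R | exists v : 'cV[R]_p, v != 0 /\ r = gvar q v / gvar pi v].

(* Block-diagonal part of Q for the block structure given by
   blk : 'I_p -> 'I_m (index i belongs to block blk i). *)
Definition blockdiag {R : realType} {p m : nat} (blk : 'I_p -> 'I_m)
  (Q : 'M[R]_p) : 'M[R]_p :=
  \matrix_(i, j) (if blk i == blk j then Q i j else 0).

Definition vnorm {R : realType} {p : nat} (v : 'cV[R]_p) : R :=
  Num.sqrt ((v^T *m v) 0 0).

From HB Require Import structures.
From mathcomp Require Import all_boot all_order all_algebra.
From mathcomp Require Import boolp classical_sets reals.
From mathcomp Require Import ring.
Import Order.TTheory GRing.Theory Num.Theory.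
Local Open Scope ring_scope.

(* Since Qtilde is block diagonal, conjugation by a block sign matrix
   (+1 on block k, -1 elsewhere) fixes Qtilde^-1 = S^2; by uniqueness of the
   positive square root it commutes with S, so S preserves every block and
   Qbar = S Q S is the identity on each diagonal block.  For
   w = |v_l| v_k - |v_k| v_l the Rayleigh quotient of Qbar is therefore exactly
   1 - v_k^T Qbar v_l / (|v_k| |v_l|).  Any Rayleigh quotient of Qbar bounds
   UQF: test the infimum at u = S^-1 w and apply Cauchy-Schwarz for the inner
   product of Q to Q^-1 u and S w. *)

Section BilinearForm.
Context {R : comUnitRingType} {p : nat}.
Implicit Types (x y z : 'cV[R]_p) (A B P : 'M[R]_p).

Definition bform x A y : R := (x^T *m A *m y) 0 0.

Lemma bformE x A y : bform x A y = \sum_j (\sum_i x i 0 * A i j) * y j 0.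
Proof.
rewrite /bform mxE; apply: eq_bigr => j _; rewrite mxE; congr (_ * _).
by apply: eq_bigr => i _; rewrite mxE.
Qed.

Lemma bform1E x y : bform x 1%:M y = \sum_i x i 0 * y i 0.
Proof. by rewrite /bform mulmx1 mxE; apply: eq_bigr => i _; rewrite mxE. Qed.

Lemma bformBl x y A z : bform (x - y) A z = bform x A z - bform y A z.
Proof. by rewrite /bform linearB /= !mulmxBl !mxE. Qed.

Lemma bformBr x y A z : bform z A (x - y) = bform z A x - bform z A y.
Proof. by rewrite /bform mulmxBr !mxE. Qed.

Lemma bformZl a x A z : bform (a *: x) A z = a * bform x A z.
Proof. by rewrite /bform linearZ /= -!scalemxAl mxE. Qed.

Lemma bformZr a x A z : bform z A (a *: x) = a * bform z A x.
Proof. by rewrite /bform -scalemxAr mxE. Qed.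

Lemma bform_sym x A y : A^T = A -> bform x A y = bform y A x.
Proof.
move=> sA; have tr : (y^T *m A *m x)^T = x^T *m A *m y.
  by rewrite !trmx_mul trmxK sA mulmxA.
by rewrite /bform -tr mxE.
Qed.

Lemma bform_mulmxl x A B y : bform (A *m x) B y = bform x (A^T *m B) y.
Proof. by rewrite /bform trmx_mul !mulmxA. Qed.

Lemma bform_mulmxr x A B y : bform x B (A *m y) = bform x (B *m A) y.
Proof. by rewrite /bform !mulmxA. Qed.

Lemma mxtrace_bform (X A : 'M[R]_p) : X^T = X ->
  \tr (X *m A *m X) = \sum_i bform (col i X) A (col i X).
Proof.
move=> sX; apply: eq_bigr => i _; rewrite bformE mxE.
apply: eq_bigr => j _; rewrite !mxE; congr (_ * _).
by apply: eq_bigr => k _; rewrite !mxE -{1}sX mxE.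
Qed.

Lemma invmx_conj P A : P *m P = 1%:M ->
  invmx (P *m A *m P) = P *m invmx A *m P.
Proof.
move=> PP; have [uP _] := mulmx1_unit PP.
have [uA | nuA] := boolP (A \in unitmx); last first.
  have nuPAP : P *m A *m P \notin unitmx by rewrite !unitmx_mul (negbTE nuA) andbF.
  by rewrite !invmx_out.
have uPAP : P *m A *m P \in unitmx by rewrite !unitmx_mul uP uA.
have inv : P *m invmx A *m P *m (P *m A *m P) = 1%:M.
  by rewrite !mulmxA -(mulmxA _ P P) PP mulmx1 mulmxKV // PP.
by rewrite -[LHS]mul1mx -inv mulmxK.
Qed.

End BilinearForm.

Section PositiveDefinite.
Context {R : realType} {p : nat}.
Implicit Types (x y v w : 'cV[R]_p) (A P S : 'M[R]_p).

Lemma posdef_form_ge0 x A : posdef A -> 0 <= bform x A x.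
Proof.
move=> [_ pA]; have [->|x0] := eqVneq x 0; last exact/ltW/pA.
by rewrite /bform mulmx0 mxE.
Qed.

Lemma posdef_form_eq0 x A : posdef A -> bform x A x = 0 -> x = 0.
Proof.
move=> [_ pA] Ax0; apply/eqP/negPn/negP => /pA.
by rewrite -/(bform x A x) Ax0 ltxx.
Qed.

Lemma posdef_unitmx A : posdef A -> A \in unitmx.
Proof.
move=> pA; rewrite unitmxE unitfE; apply/det0P => -[v /eqP v0 vA]; apply: v0.
apply: trmx_inj; rewrite trmx0; apply: (posdef_form_eq0 _ _ pA).
by rewrite /bform trmxK vA mul0mx mxE.
Qed.

Lemma posdef_inv A : posdef A -> posdef (invmx A).
Proof.
move=> pA; have [sA Apos] := pA; have uA := posdef_unitmx _ pA.
split=> [|v v0]; first by rewrite trmx_inv sA.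
change (0 < bform v (invmx A) v).
have -> : bform v (invmx A) v = bform (invmx A *m v) A (invmx A *m v).
  by rewrite bform_mulmxl bform_mulmxr trmx_inv sA mulVmx // mul1mx.
apply: Apos; apply: contra v0 => /eqP Av0.
by rewrite -(mulKVmx uA v) Av0 mulmx0.
Qed.

Lemma posdef1 : posdef (1%:M : 'M[R]_p).
Proof.
split=> [|v v0]; first exact: trmx1.
have sq_ge0 i : 0 <= v i 0 * v i 0 by rewrite -expr2 sqr_ge0.
change (0 < bform v 1%:M v); rewrite bform1E lt_def sumr_ge0 ?andbT //.
apply: contra v0 => /eqP sum0; apply/eqP/matrixP => i j; rewrite (ord1 j) mxE.
have /eqP := psumr_eq0P (fun k _ => sq_ge0 k) sum0 (i := i) isT.
by rewrite mulf_eq0 orbb => /eqP.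
Qed.

Lemma posdef_cauchy_schwarz x y A : posdef A ->
  bform x A y ^+ 2 <= bform x A x * bform y A y.
Proof.
move=> pA; have [sA _] := pA; have [->|y0] := eqVneq y 0.
  by rewrite /bform !mulmx0 !mxE expr0n mulr0.
have yAy_gt0 : 0 < bform y A y by case: pA => _; apply.
have := posdef_form_ge0 (x - (bform x A y / bform y A y) *: y) A pA.
rewrite !(bformBl, bformBr, bformZl, bformZr) (bform_sym y A x sA).
set c := bform x A y; set d := bform y A y; set e := bform x A x => h.
rewrite -subr_ge0 (_ : e * d - c ^+ 2 = d * (e - c / d * c - c / d * (c - c / d * d))).
  exact: mulr_ge0 (ltW yAy_gt0) h.
by field; rewrite gt_eqF.
Qed.

Lemma posdef_sqrt_unique S S' : posdef S -> S'^T = S' ->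
  (forall v, 0 <= bform v S' v) -> S *m S = S' *m S' -> S = S'.
Proof.
move=> pS sS' pS' SS; have [sS _] := pS.
set X := S - S'; have sX : X^T = X by rewrite /X linearB /= sS sS'.
have SX_XS' : S *m X + X *m S' = 0.
  by rewrite /X mulmxBr !mulmxBl SS addrA subrK subrr.
have : \tr (X *m (S *m X + X *m S')) = 0 by rewrite SX_XS' mulmx0 mxtrace0.
rewrite mulmxDr mxtraceD (mxtrace_mulC X (X *m S')) mulmxA.
have XSX_ge0 i : 0 <= bform (col i X) S (col i X) by apply: posdef_form_ge0.
rewrite !mxtrace_bform // => /eqP; rewrite paddr_eq0 ?sumr_ge0 // => /andP[/eqP XSX _].
  apply/eqP; rewrite -subr_eq0 -/X; apply/eqP/matrixP => i j.
  have /matrixP/(_ i 0) := posdef_form_eq0 _ _ pS (psumr_eq0P (fun k _ => XSX_ge0 k) XSX (i := j) isT).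
  by rewrite !mxE.
Qed.



Lemma posdef_sqrt_commute S P : posdef S -> P^T = P -> P *m P = 1%:M ->
  P *m (S *m S) *m P = S *m S -> P *m S = S *m P.
Proof.
move=> pS sP PP PSSP; have [sS _] := pS.
suff PSP : S = P *m S *m P by rewrite [in RHS]PSP -!mulmxA PP mulmx1.
apply: posdef_sqrt_unique => //.
- by rewrite !trmx_mul sP sS mulmxA.
- move=> v; rewrite -bform_mulmxr -[P in P *m S]sP -bform_mulmxl.
  exact: posdef_form_ge0.
- by rewrite -[LHS]PSSP !mulmxA -[_ *m P *m P]mulmxA PP mulmx1.
Qed.

Lemma vnorm_sqr v : vnorm v ^+ 2 = bform v 1%:M v.
Proof.
have := posdef_form_ge0 v _ posdef1.
by rewrite /vnorm /bform mulmx1 => /sqr_sqrtr.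
Qed.

Lemma vnorm_gt0 v : v != 0 -> 0 < vnorm v.
Proof.
move=> v0; have [_ /(_ v v0)] := posdef1.
by rewrite /vnorm sqrtr_gt0 mulmx1.
Qed.

End PositiveDefinite.

Section RayleighQuotient.
Context {R : realType} {p : nat}.
Implicit Types (x y w : 'cV[R]_p) (A : 'M[R]_p).

Definition rayleigh A w : R := bform w A w / bform w 1%:M w.

Definition scaled_diff x y : 'cV[R]_p := vnorm y *: x - vnorm x *: y.

Lemma bform_scaled_diff A x y : A^T = A ->
  bform x A x = bform x 1%:M x -> bform y A y = bform y 1%:M y ->
  bform (scaled_diff x y) A (scaled_diff x y)
    = 2 * (vnorm x * vnorm y) ^+ 2 - 2 * (vnorm x * vnorm y) * bform x A y.
Proof.
move=> sA xAx yAy; rewrite !(bformBl, bformBr, bformZl, bformZr).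
by rewrite (bform_sym y A x sA) xAx yAy -!vnorm_sqr; ring.
Qed.

Lemma bform1_scaled_diff x y : bform x 1%:M y = 0 ->
  bform (scaled_diff x y) 1%:M (scaled_diff x y) = 2 * (vnorm x * vnorm y) ^+ 2.
Proof. by move=> xy0; rewrite bform_scaled_diff ?trmx1 // xy0 mulr0 subr0. Qed.

Lemma scaled_diff_neq0 x y : bform x 1%:M y = 0 -> x != 0 -> y != 0 ->
  scaled_diff x y != 0.
Proof.
move=> xy0 x0 y0; apply/eqP => w0.
have := bform1_scaled_diff _ _ xy0; rewrite w0 /bform mulmx0 mxE => /esym/eqP.
by rewrite mulf_eq0 sqrf_eq0 mulf_eq0 !gt_eqF ?vnorm_gt0.
Qed.

Lemma rayleigh_scaled_diff A x y : A^T = A ->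
  bform x A x = bform x 1%:M x -> bform y A y = bform y 1%:M y ->
  bform x 1%:M y = 0 -> x != 0 -> y != 0 ->
  rayleigh A (scaled_diff x y) = 1 - bform x A y / (vnorm x * vnorm y).
Proof.
move=> sA xAx yAy xy0 x0 y0.
rewrite /rayleigh bform_scaled_diff // bform1_scaled_diff //.
by field; rewrite !gt_eqF ?vnorm_gt0.
Qed.

End RayleighQuotient.

Section UncertaintyQuantificationFraction.
Context {R : realType} {p : nat}.
Implicit Types (q pi : gaussian R p) (u v w : 'cV[R]_p).

Lemma gvarE q v : gvar q v = bform v (invmx (g_prec q)) v.
Proof. by []. Qed.

Lemma UQF_le_ratio q pi u :
  (forall v, 0 <= gvar q v) -> (forall v, 0 <= gvar pi v) -> u != 0 ->
  UQF q pi <= gvar q u / gvar pi u.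
Proof.
move=> q_ge0 pi_ge0 u0; apply: ge_inf; last by exists u.
by exists 0 => _ [v [_ ->]]; exact: divr_ge0.
Qed.

Lemma UQF_le_rayleigh q pi (S : 'M[R]_p) w :
  posdef (g_prec pi) -> posdef S -> S *m S = invmx (g_prec q) -> w != 0 ->
  UQF q pi <= rayleigh (S *m g_prec pi *m S) w.
Proof.
set Q := g_prec pi => pQ pS SS w0; have [sS _] := pS; have [sQ _] := pQ.
have uS := posdef_unitmx _ pS; have uQ := posdef_unitmx _ pQ.
have gvar_q v : gvar q v = bform (S *m v) 1%:M (S *m v).
  by rewrite gvarE -SS bform_mulmxl bform_mulmxr sS mulmx1.
set u := invmx S *m w; have Su : S *m u = w by rewrite mulKVmx.
have u0 : u != 0 by apply: contra w0 => /eqP u0; rewrite -Su u0 mulmx0.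
have q_ge0 v : 0 <= gvar q v by rewrite gvar_q; apply: posdef_form_ge0 posdef1.
have pi_ge0 v : 0 <= gvar pi v by apply: posdef_form_ge0 (posdef_inv _ pQ).
apply: le_trans (UQF_le_ratio _ _ _ q_ge0 pi_ge0 u0) _.
rewrite gvar_q Su gvarE /rayleigh.
set ww := bform w 1%:M w; set g := bform u (invmx Q) u.
have ww_gt0 : 0 < ww by case: (@posdef1 R p) => _; apply.
have g_gt0 : 0 < g by case: (posdef_inv _ pQ) => _; apply.
have cross : bform (invmx Q *m u) Q (S *m w) = ww.
  rewrite bform_mulmxl bform_mulmxr trmx_inv sQ mulVmx // mul1mx.
  by rewrite /ww -{2}Su [RHS]bform_mulmxl sS mulmx1.
have Qinv_u : bform (invmx Q *m u) Q (invmx Q *m u) = g.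
  by rewrite bform_mulmxl bform_mulmxr trmx_inv sQ mulVmx // mul1mx.
have := posdef_cauchy_schwarz (invmx Q *m u) (S *m w) _ pQ.
rewrite cross Qinv_u bform_mulmxl bform_mulmxr sS => CS.
by rewrite ler_pdivrMr // mulrAC ler_pdivlMr // -expr2 mulrC.
Qed.

End UncertaintyQuantificationFraction.

Section BlockStructure.
Context {R : realType} {p m : nat} (blk : 'I_p -> 'I_m).
Implicit Types (k l : 'I_m) (x y : 'cV[R]_p) (Q : 'M[R]_p).

Definition in_block k x : Prop := forall i, blk i != k -> x i 0 = 0.

Definition block_sign k : 'M[R]_p :=
  diag_mx (\row_i (if blk i == k then 1 else -1)).

Lemma block_sign_tr k : (block_sign k)^T = block_sign k.
Proof. exact: tr_diag_mx. Qed.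

Lemma block_sign_invol k : block_sign k *m block_sign k = 1%:M.
Proof.
rewrite mul_diag_mx; apply/matrixP => i j; rewrite !mxE mulrnAr.
by case: ifP; rewrite ?mulr1 ?mulrNN ?mulr1.
Qed.

Lemma block_sign_blockdiag k Q :
  block_sign k *m blockdiag blk Q *m block_sign k = blockdiag blk Q.
Proof.
rewrite mul_diag_mx mul_mx_diag; apply/matrixP => i j; rewrite !mxE.
have [->|_] := eqVneq (blk i) (blk j); last by rewrite !mulr0 mul0r.
by case: ifP; rewrite ?mulr1 ?mul1r ?mulN1r ?mulrN1 ?opprK.
Qed.

Lemma in_blockP k x : in_block k x <-> block_sign k *m x = x.
Proof.
rewrite mul_diag_mx; split=> [xk | /matrixP xk i ki].
  apply/matrixP => i j; rewrite !mxE (ord1 j).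
  by have [_|ki] := eqVneq (blk i) k; rewrite ?mul1r // xk // mulr0.
move: (xk i 0); rewrite !mxE (negbTE ki) mulN1r => /eqP.
by rewrite -subr_eq0 -opprD oppr_eq0 -mulr2n mulrn_eq0 => /eqP.
Qed.

Lemma bform_blockdiag k x y Q : in_block k x -> in_block k y ->
  bform x (blockdiag blk Q) y = bform x Q y.
Proof.
move=> xk yk; rewrite !bformE; apply: eq_bigr => j _.
have [jk|kj] := eqVneq (blk j) k; last by rewrite yk // !mulr0.
congr (_ * _); apply: eq_bigr => i _.
have [ik|ki] := eqVneq (blk i) k; last by rewrite xk // !mul0r.
by rewrite mxE ik jk eqxx.
Qed.

Lemma in_block_orth k l x y : k != l -> in_block k x -> in_block l y ->
  bform x 1%:M y = 0.
Proof.
move=> kl xk yl; rewrite bform1E big1 // => i _.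
have [ik|ki] := eqVneq (blk i) k; last by rewrite xk // mul0r.
by rewrite yl ?mulr0 // ik.
Qed.

Variables (Q S : 'M[R]_p).
Hypotheses (pS : posdef S) (SS : S *m S = invmx (blockdiag blk Q)).

Lemma sqrt_blockdiag_in_block k x : in_block k x -> in_block k (S *m x).
Proof.
have P_SS_P : block_sign k *m (S *m S) *m block_sign k = S *m S.
  by rewrite SS -invmx_conj ?block_sign_invol // block_sign_blockdiag.
have PS := posdef_sqrt_commute _ _ pS (block_sign_tr k) (block_sign_invol k) P_SS_P.
by move=> /in_blockP xk; apply/in_blockP; rewrite mulmxA PS -mulmxA xk.
Qed.

Lemma sqrt_blockdiag_form k x : in_block k x ->
  bform x (S *m Q *m S) x = bform x 1%:M x.
Proof.
have [sS _] := pS; have uS := posdef_unitmx _ pS.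
have SDS : S *m blockdiag blk Q *m S = 1%:M.
  rewrite -[blockdiag blk Q]invmxK -SS -{1}(mulKmx uS S).
  by rewrite mulmxK ?unitmx_mul ?uS // mulVmx.
have SAS A : bform x (S *m A *m S) x = bform (S *m x) A (S *m x).
  by rewrite bform_mulmxl bform_mulmxr sS.
move=> xk; have Sxk := sqrt_blockdiag_in_block _ _ xk.
by rewrite SAS -(bform_blockdiag _ _ _ Q Sxk Sxk) -SAS SDS.
Qed.

End BlockStructure.

Theorem mainTheorem7 (R : realType) (p m : nat) (blk : 'I_p -> 'I_m)
  (mu mu' : 'cV[R]_p) (Q : 'M[R]_p) (S : 'M[R]_p)
  (k l : 'I_m) (vk vl : 'cV[R]_p) :
  posdef Q ->
  (* S = Qtilde^{-1/2}: the symmetric positive definite square root of Qtilde^{-1} *)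
  posdef S -> S *m S = invmx (blockdiag blk Q) ->
  k != l ->
  vk != 0 -> vl != 0 ->
  (forall i, blk i != k -> vk i 0 = 0) ->
  (forall i, blk i != l -> vl i 0 = 0) ->
  UQF (Gaussian mu' (blockdiag blk Q)) (Gaussian mu Q)
    <= 1 - (vk^T *m (S *m Q *m S) *m vl) 0 0 / (vnorm vk * vnorm vl).
Proof.
move=> pQ pS SS kl vk0 vl0 vk_k vl_l.
have [sQ _] := pQ; have [sS _] := pS.
have sQbar : (S *m Q *m S)^T = S *m Q *m S by rewrite !trmx_mul sS sQ mulmxA.
have vk_vl := in_block_orth blk k l vk vl kl vk_k vl_l.
have Qbar_vk := sqrt_blockdiag_form blk Q S pS SS k vk vk_k.
have Qbar_vl := sqrt_blockdiag_form blk Q S pS SS l vl vl_l.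
rewrite -/(bform vk _ vl) -rayleigh_scaled_diff //.
apply: UQF_le_rayleigh => //; exact: scaled_diff_neq0.
Qed.
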